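(* For every integer $\Delta\ge 3$ and every integer $g\ge 3$, there exists a $\Delta$-regular bipartite graph $G$ with girth at least $g$ such that $\chi'_{inj}(G)\ge \Delta$.
   Context: All graphs are finite and simple. An edge coloring of a graph $G$ (not necessarily proper) is \emph{injective} if any two distinct edges $e,f$ receive distinct colors whenever either (i) $e$ and $f$ share no vertex and some edge of $G$ joins an endpoint of $e$ to an endpoint of $f$, or (ii) $e$ and $f$ lie in a common triangle of $G$. The injective chromatic index $\chi'_{inj}(G)$ is the minimum number of colors in an injective edge coloring of $G$. *)

From mathcomp Require Import all_boot.
Set Implicit Arguments. Unset Strict Implicit. Unset Printing Implicit Defensive.

Definition simple_graph (T : finType) (e : rel T) : Prop :=
  symmetric e /\ irreflexive e.

Definition is_edge (T : finType) (e : rel T) (f : {set T}) : bool :=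
  [exists x, exists y, e x y && (f == [set x; y])].

Definition regular (T : finType) (e : rel T) (d : nat) : Prop :=
  forall x : T, #|[set y | e x y]| = d.

Definition bipartite (T : finType) (e : rel T) : Prop :=
  exists A : {set T}, forall x y, e x y -> (x \in A) != (y \in A).

(* girth >= g : every cycle (closed walk on >= 3 distinct vertices) has length >= g.
   Acyclic graphs have infinite girth and satisfy this for all g. *)
Definition girth_at_least (T : finType) (e : rel T) (g : nat) : Prop :=
  forall p : seq T, uniq p -> 3 <= size p -> cycle e p -> g <= size p.

(* Injective edge coloring with colours 'I_k (only the values on edges matter):
   distinct edges f1, f2 get distinct colours whenever (i) they are disjoint and
   some edge joins an endpoint of f1 to an endpoint of f2, or (ii) they lie in a
   common triangle {a, b, z}. *)
Definition injective_edge_coloring (T : finType) (e : rel T) (k : nat)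
  (c : {ffun {set T} -> 'I_k}) : bool :=
  [forall f1 : {set T}, forall f2 : {set T},
    [&& is_edge e f1, is_edge e f2, f1 != f2 &
      ( ([disjoint f1 & f2] && [exists u in f1, exists v in f2, e u v])
        || [exists a, exists b, exists z,
              [&& e a b, e b z, e a z & f1 :|: f2 == [set a; b; z]]] )]
    ==> (c f1 != c f2)].

Definition inj_edge_colorable (T : finType) (e : rel T) (k : nat) : bool :=
  [exists c : {ffun {set T} -> 'I_k}, injective_edge_coloring e c].

Lemma inj_edge_colorable_exists (T : finType) (e : rel T) :
  exists k, inj_edge_colorable e k.
Proof.
exists #|{set T}|; apply/existsP; exists [ffun A => enum_rank A].
apply/forallP => f1; apply/forallP => f2; apply/implyP => /and4P [_ _ ne _].
by rewrite !ffunE; apply: contra ne => /eqP /enum_rank_inj ->.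
Qed.

Definition inj_chromatic_index (T : finType) (e : rel T) : nat :=
  ex_minn (inj_edge_colorable_exists e).

From mathcomp Require Import all_boot.
From mathcomp Require Import fingroup perm zify.
Set Implicit Arguments. Unset Strict Implicit. Unset Printing Implicit Defensive.

(* The graph has two copies of a group as its sides, h being joined to h s_i,
   where the Delta generators s_i are such that no nonempty reduced word of
   length < g evaluates to 1. It is Delta-regular and bipartite, and a cycle of
   length < g would spell such a word. A suitable group is generated by
   permutations of the reduced words of length < g: s_i extends right
   multiplication by the i-th free generator.

   For the lower bound, take an injective edge colouring of a triangle-free
   Delta-regular graph with edge set E; let colour j have e_j edges and cover
   the vertex set V_j. Every edge inside V_j has colour j, and colour j is a
   star forest, so e_j < |V_j|. Counting edge ends at V_j gives
   Delta |V_j| <= |E| + e_j, hence (Delta - 1) e_j < |E| when e_j > 0.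
   Summing over the k colours, (Delta - 1) |E| < k |E|. *)

Lemma perm_extend (T : finType) (A : {pred T}) (f : T -> T) :
  {in A &, injective f} -> {s : {perm T} | {in A, s =1 f}}.
Proof.
move=> injf; suff [s sf] : {s : {perm T} | {in enum A, s =1 f}}.
  by exists s => x xA; apply: sf; rewrite mem_enum.
have : {subset enum A <= A} by move=> x; rewrite mem_enum.
elim: (enum A) => [|x r IH] rA; first by exists 1%g.
have /IH [s sf] : {subset r <= A} by move=> y yr; apply: rA; rewrite inE yr orbT.
have [xr | xNr] := boolP (x \in r).
  by exists s => z /predU1P [->|]; apply: sf.
exists (s * tperm (s x) (f x))%g => z; rewrite inE => /predU1P [-> | zr].
  by rewrite permM tpermL.
have zx : z != x by apply: contraNneq xNr => <-.
have fzx : f x != f z.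
  by apply: contra zx => /eqP/injf-> //; rewrite ?rA ?mem_head // inE zr orbT.
have sxfz : s x != f z by rewrite -(sf z zr) (inj_eq perm_inj) eq_sym.
by rewrite permM (sf z zr) tpermD.
Qed.

Lemma nth_closed_walk_neq (T : eqType) (x : T) (p : seq T) t :
  uniq (x :: p) -> 1 < size p -> t < size p ->
  nth x (x :: rcons p x) t != nth x (x :: rcons p x) t.+2.
Proof.
move=> up p_gt1 tp.
have nthE n : n <= size p -> nth x (x :: rcons p x) n = nth x (x :: p) n.
  by move=> np; rewrite -rcons_cons nth_rcons /= ltnS np.
rewrite nthE ?(ltnW tp) //; have [t2p | pt] := leqP t.+2 (size p).
  by rewrite nthE // nth_uniq //=; lia.
have tp1 : t.+1 = size p by lia.
rewrite -rcons_cons nth_rcons /= -tp1 ltnn eqxx -[x in _ != x]/(nth x (x :: p) 0).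
by rewrite nth_uniq //=; lia.
Qed.

Lemma card_gt1_neq (T : finType) (A : {pred T}) y : 1 < #|A| -> exists2 z, z \in A & z != y.
Proof.
case/card_gt1P => a [b [aA bA ab]]; have [ay|] := eqVneq a y; last by exists a.
by exists b; rewrite // -ay eq_sym.
Qed.

Section ReducedWords.
Variable I : eqType.

Definition inv_letter (a : I * bool) : I * bool := (a.1, ~~ a.2).

Lemma inv_letterK : involutive inv_letter.
Proof. by case=> i b; rewrite /inv_letter negbK. Qed.

Lemma eq_inv_letterC a b : (a == inv_letter b) = (b == inv_letter a).
Proof. by apply/eqP/eqP => ->; rewrite inv_letterK. Qed.

Lemma inv_letter_neq a : a != inv_letter a.
Proof. by case: a => i b; rewrite /inv_letter xpair_eqE eqxx; case: b. Qed.

Definition reduced (w : seq (I * bool)) := sorted (fun a b => b != inv_letter a) w.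

Lemma reduced_rcons w a :
  reduced (rcons w a) = reduced w && (a != inv_letter (last a w)).
Proof. by case: w => [|b w] /=; rewrite ?rcons_path ?inv_letter_neq. Qed.

Definition push a w :=
  if last a w == inv_letter a then take (size w).-1 w else rcons w a.

Lemma push_rcons a w : reduced (rcons w a) -> push a w = rcons w a.
Proof. by rewrite reduced_rcons eq_inv_letterC /push => /andP [_ /negbTE ->]. Qed.

Lemma push_inv a w : push a (rcons w (inv_letter a)) = w.
Proof. by rewrite /push last_rcons eqxx size_rcons -cats1 take_size_cat. Qed.

Lemma pushK a w : reduced w -> push (inv_letter a) (push a w) = w.
Proof.
rewrite {2}/push; case: eqP => [lw | _] rw; last first.
  by rewrite -{2}[a]inv_letterK push_inv.
case/lastP: w lw rw => [/eqP | u b]; first by rewrite (negbTE (inv_letter_neq a)).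
rewrite last_rcons => -> rw.
by rewrite size_rcons -cats1 take_size_cat // cats1 push_rcons.
Qed.

End ReducedWords.

Section WordEval.
Local Open Scope group_scope.
Variables (gT : finGroupType) (I : eqType) (s : I -> gT).

Definition gen (a : I * bool) : gT := if a.2 then (s a.1)^-1 else s a.1.

Definition eval (w : seq (I * bool)) : gT := \prod_(a <- w) gen a.

Definition free_upto (R : nat) :=
  forall w, reduced w -> size w <= R -> eval w = 1 -> w = [::].

Lemma gen_inv_letter a : gen a * gen (inv_letter a) = 1.
Proof. by case: a => i [|]; rewrite /gen /= ?mulVg ?mulgV. Qed.

Lemma free_upto_inj R : 1 < R -> free_upto R -> injective s.
Proof.
move=> R_gt1 free i j sij; apply/eqP; apply: contraT => ij.
have rw : reduced [:: (i, false); (j, true)].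
  by rewrite /reduced /= andbT /inv_letter xpair_eqE eq_sym (negbTE ij).
have := free _ rw R_gt1.
by rewrite /eval !big_cons big_nil /gen /= sij mulg1 mulgV => /(_ erefl).
Qed.

End WordEval.

Section FreePermutations.
Variables (I : finType) (R : nat).
Local Notation word := {bseq R of I * bool}.

Definition push_dom (a : I * bool) : {pred word} :=
  [pred w : word | reduced w && ((size w < R) || (last a w == inv_letter a))].

Definition push_word a (w : word) : word := insub_bseq R (push a w).

Lemma val_push_word a w : w \in push_dom a -> val (push_word a w) = push a w.
Proof.
case/andP=> _ dom; rewrite val_insubd ifT // /push; case: ifP dom => [_ _ | _].
  rewrite size_take; case: ifP => [/ltnW le|_]; last exact: size_bseq.
  exact: leq_trans le (size_bseq w).
by rewrite orbF size_rcons.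
Qed.

Lemma push_word_inj a : {in push_dom a &, injective (push_word a)}.
Proof.
move=> x y xD yD /(congr1 val); rewrite !val_push_word // => /(congr1 (push (inv_letter a))).
by case/andP: xD => rx _; case/andP: yD => ry _; rewrite !pushK // => /val_inj.
Qed.

(* Right multiplication by the i-th generator wherever it keeps the length at
   most R, completed arbitrarily to a permutation. *)
Definition shift i : {perm word} := sval (perm_extend (@push_word_inj (i, false))).

Lemma shiftE i w : w \in push_dom (i, false) -> val (shift i w) = push (i, false) w.
Proof. by move=> wD; rewrite /shift; case: perm_extend => /= sg ->; rewrite ?val_push_word. Qed.

Lemma eval_shift_nil w : reduced w -> size w <= R -> val (eval shift w [bseq]) = w.
Proof.
elim/last_ind: w => [|w a IH]; first by rewrite /eval big_nil perm1.
rewrite size_rcons => rwa wR.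
have rw : reduced w by move: rwa; rewrite reduced_rcons => /andP [].
have {IH} xw := IH rw (ltnW wR).
rewrite /eval big_rcons permM -/(eval shift w); set x := eval shift w [bseq] in xw *.
case: a rwa => i [|] rwa; rewrite /gen /=.
  pose y : word := insub_bseq R (rcons w (i, true)).
  have yw : val y = rcons w (i, true) by rewrite val_insubd size_rcons wR.
  have yD : y \in push_dom (i, false) by rewrite inE yw rwa last_rcons eqxx orbT.
  have -> : x = shift i y by apply: val_inj; rewrite shiftE // yw xw push_inv.
  by rewrite permK.
have xD : x \in push_dom (i, false) by rewrite inE xw rw wR.
by rewrite shiftE // xw push_rcons.
Qed.

Lemma shift_free : free_upto shift R.
Proof. by move=> w rw wR w1; have := eval_shift_nil rw wR; rewrite w1 perm1. Qed.

End FreePermutations.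

Section BiCayleyGraph.
Local Open Scope group_scope.
Variables (gT : finGroupType) (I : finType) (s : I -> gT).
Local Notation gen := (gen s).
Local Notation eval := (eval s).

Definition bicayley (u v : gT * bool) : bool :=
  (u.2 != v.2) && [exists i, v.1 == u.1 * gen (i, u.2)].

Lemma bicayley_flip u v : bicayley u v -> v.2 = ~~ u.2.
Proof. by case/andP; case: u.2; case: v.2. Qed.

Lemma bicayley_sym : symmetric bicayley.
Proof.
suff sub u v : bicayley u v -> bicayley v u by move=> u v; apply/idP/idP; apply: sub.
move=> uv; have v2 := bicayley_flip uv; case/andP: uv => _ /existsP [i /eqP v1].
rewrite /bicayley v2; apply/andP; split; first by case: u.2.
by apply/existsP; exists i; rewrite v1 -mulgA gen_inv_letter mulg1.
Qed.

Lemma bicayley_irr : irreflexive bicayley.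
Proof. by move=> u; rewrite /bicayley eqxx. Qed.

Lemma bicayley_bipartite : bipartite bicayley.
Proof. by exists [set u | u.2] => u v /bicayley_flip v2; rewrite !inE v2; case: u.2. Qed.

Lemma bicayley_regular : injective s -> regular bicayley #|I|.
Proof.
move=> s_inj u.
have -> : [set v | bicayley u v] = [set (u.1 * gen (i, u.2), ~~ u.2) | i : I].
  apply/setP => v; rewrite inE; apply/idP/imsetP => [uv | [i _ ->]].
    have [i /eqP v1] := existsP (proj2 (andP uv)).
    by exists i => //; rewrite -v1 -(bicayley_flip uv) -surjective_pairing.
  by rewrite /bicayley /=; apply/andP; split; [case: u.2 | apply/existsP; exists i].
rewrite card_imset // => i j [/mulgI].
by rewrite /gen /=; case: u.2 => [/invg_inj|] /s_inj.
Qed.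

Definition arc_letter (i0 : I) (u v : gT * bool) : I * bool :=
  (odflt i0 [pick i | v.1 == u.1 * gen (i, u.2)], u.2).

Lemma arc_letterP i0 u v : bicayley u v -> v.1 = u.1 * gen (arc_letter i0 u v).
Proof.
case/andP => _ /existsP [i iuv]; rewrite /arc_letter.
by case: pickP => [j /eqP //|/(_ i)]; rewrite iuv.
Qed.

Lemma eval_walk i0 x q : path bicayley x q ->
  x.1 * eval (pairmap (arc_letter i0) x q) = (last x q).1.
Proof.
elim: q x => [|y q IH] x /=; first by rewrite /eval big_nil mulg1.
by case/andP => xy yq; rewrite /eval big_cons mulgA -arc_letterP // IH.
Qed.

Lemma reduced_walk i0 d x q : path bicayley x q ->
  (forall t, t.+2 < size (x :: q) -> nth d (x :: q) t != nth d (x :: q) t.+2) ->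
  reduced (pairmap (arc_letter i0) x q).
Proof.
elim: q x => [//|y q IH] x /andP [xy yq] nbt.
have {}IH := IH y yq (fun t => nbt t.+1).
case: q yq nbt IH => [//|z q] /= /andP [yz _] nbt ->; rewrite andbT.
apply: contra (nbt 0 isT) => /eqP back.
have z1 : z.1 = x.1.
  by rewrite (arc_letterP i0 yz) back (arc_letterP i0 xy) -mulgA gen_inv_letter mulg1.
have z2 : z.2 = x.2 by rewrite (bicayley_flip yz) (bicayley_flip xy) negbK.
by rewrite [x]surjective_pairing [z]surjective_pairing z1 z2.
Qed.

Lemma bicayley_girth R : free_upto s R -> girth_at_least bicayley R.+1.
Proof.
move=> free [//|x p] up p_ge3 cyc; rewrite leqNgt; apply/negP => pR.
have [i0 _] : exists i0 : I, true.
  by case: p {up pR} p_ge3 cyc => [//|y p] _ /andP [/andP [_ /existsP [i _]] _]; exists i.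
set w := pairmap (arc_letter i0) x (rcons p x).
have w1 : eval w = 1 by apply: (mulgI x.1); rewrite eval_walk // last_rcons mulg1.
have rw : reduced w.
  apply: (reduced_walk _ (d := x) cyc) => t; rewrite /= size_rcons !ltnS.
  exact: nth_closed_walk_neq.
have sw : size w = size (x :: p) by rewrite size_pairmap size_rcons.
by move: (free w rw); rewrite sw => /(_ pR w1) w0; rewrite w0 in sw.
Qed.

End BiCayleyGraph.

Definition triangle_free (T : finType) (e : rel T) :=
  forall a b c, e a b -> e b c -> e a c -> False.

Lemma bipartite_triangle_free (T : finType) (e : rel T) : bipartite e -> triangle_free e.
Proof.
case=> A Ae a b c /Ae ab /Ae bc /Ae ac.
by move: ab bc ac; case: (a \in A); case: (b \in A); case: (c \in A).
Qed.

Section InjectiveColoringBound.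
Variables (T : finType) (e : rel T) (k : nat) (c : {ffun {set T} -> 'I_k}).
Hypotheses (e_sym : symmetric e) (e_irr : irreflexive e).
Hypotheses (e_tf : triangle_free e) (c_inj : injective_edge_coloring e c).

Definition col x y := c [set x; y].

Lemma col_sym x y : col x y = col y x.
Proof. by rewrite /col setUC. Qed.

Lemma edge_neq x y : e x y -> x != y.
Proof. by apply: contraTneq => ->; rewrite e_irr. Qed.

Lemma is_edge_pair x y : e x y -> is_edge e [set x; y].
Proof. by move=> xy; apply/existsP; exists x; apply/existsP; exists y; rewrite xy eqxx. Qed.

Lemma col_joined_neq x x' y y' : e x x' -> e y y' -> e x y ->
  x' != y -> y' != x -> x' != y' -> col x x' != col y y'.
Proof.
move=> xx' yy' xy x'y y'x x'y'.
have xNy := edge_neq xy.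
have := forallP (forallP c_inj [set x; x']) [set y; y'].
move/implyP; apply.
rewrite !is_edge_pair //=; apply/andP; split; last (apply/orP; left; apply/andP; split).
- apply/negP => /eqP E; have : x \in [set y; y'] by rewrite -E set21.
  by rewrite !inE (negbTE xNy) eq_sym (negbTE y'x).
- rewrite disjoints_subset; apply/subsetP => z; rewrite !inE.
  by case/orP => /eqP ->; rewrite negb_or ?xNy ?x'y ?x'y' // eq_sym.
- by apply/existsP; exists x; rewrite set21; apply/existsP; exists y; rewrite set21.
Qed.

Definition nbr_col j x := [set y | e x y && (col x y == j)].
Definition verts_col j := [set x | [exists y, e x y && (col x y == j)]].
Definition arcs := [set d : T * T | e d.1 d.2].
Definition arcs_col j := [set d : T * T | e d.1 d.2 && (col d.1 d.2 == j)].

Lemma arc_col_mem j x y : e x y -> col x y = j ->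
  [/\ y \in nbr_col j x, x \in verts_col j & y \in verts_col j].
Proof.
move=> xy xyj; rewrite !inE xy xyj eqxx; split=> //; apply/existsP.
  by exists y; rewrite xy xyj eqxx.
by exists x; rewrite e_sym xy col_sym xyj eqxx.
Qed.

Lemma verts_col_induced j x y :
  e x y -> x \in verts_col j -> y \in verts_col j -> col x y = j.
Proof.
move=> xy; rewrite !inE => /existsP [x' /andP [xx' /eqP x'j]] /existsP [y' /andP [yy' /eqP y'j]].
apply/eqP; apply: contraT => xyNj.
have [x'y|x'y] := eqVneq x' y; first by move: xyNj; rewrite -x'y x'j eqxx.
have [y'x|y'x] := eqVneq y' x; first by move: xyNj; rewrite -y'x col_sym y'j eqxx.
have [x'y'|x'y'] := eqVneq x' y'; first by move: xx'; rewrite x'y' => /(e_tf xy yy').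
by have := col_joined_neq xx' yy' xy x'y y'x x'y'; rewrite x'j y'j eqxx.
Qed.

Lemma col_leaf j x y : e x y -> col x y = j ->
  #|nbr_col j x| <= 1 \/ #|nbr_col j y| <= 1.
Proof.
move=> xy xyj; have [|/(card_gt1_neq y) [x']] := leqP #|nbr_col j x| 1; first by left.
rewrite inE => /andP [xx' /eqP x'j] x'y.
have [|/(card_gt1_neq x) [y']] := leqP #|nbr_col j y| 1; first by right.
rewrite inE => /andP [yy' /eqP y'j] y'x; exfalso.
have [x'y'|x'y'] := eqVneq x' y'; first by move: xx'; rewrite x'y' => /(e_tf xy yy').
by have := col_joined_neq xx' yy' xy x'y y'x x'y'; rewrite x'j y'j eqxx.
Qed.

Lemma nbr_colC j x y : (y \in nbr_col j x) = (x \in nbr_col j y).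
Proof. by rewrite !inE e_sym col_sym. Qed.

(* An arc is tagged by its head if that is a leaf of colour j and by its tail
   otherwise; the tail is then a leaf by col_leaf, so the tag determines the arc. *)
Definition arc_tag j (d : T * T) : T * bool :=
  if #|nbr_col j d.2| <= 1 then (d.2, true) else (d.1, false).

Lemma arc_tag_inj j : {in arcs_col j &, injective (arc_tag j)}.
Proof.
move=> [x y] [x' y']; rewrite !inE /= => /andP [xy /eqP xyj] /andP [xy' /eqP xyj'].
have [yN _ _] := arc_col_mem xy xyj; have [yN' _ _] := arc_col_mem xy' xyj'.
rewrite /arc_tag /=; case: ifP => yl; case: ifP => yl' // -[eq_yy'].
  by subst y'; rewrite (card_le1_eqP yl x' x) // -nbr_colC.
subst x'; have [xl|] := col_leaf xy xyj; last by rewrite yl.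
by rewrite (card_le1_eqP xl y' y).
Qed.

Lemma arcs_col_lt j : 0 < #|arcs_col j| -> #|arcs_col j| < 2 * #|verts_col j|.
Proof.
case/card_gt0P => -[x0 y0]; rewrite inE /= => /andP [xy0 /eqP xyj0].
have [_ x0V _] := arc_col_mem xy0 xyj0.
have -> : 2 * #|verts_col j| = #|setX (verts_col j) [set: bool]|.
  by rewrite cardsX cardsT card_bool mulnC.
rewrite -(card_in_imset (@arc_tag_inj j)); apply: proper_card; apply/properP; split.
  apply/subsetP => _ /imsetP [[x y] + ->]; rewrite inE /= => /andP [xy /eqP xyj].
  have [_ xV yV] := arc_col_mem xy xyj.
  by rewrite /arc_tag; case: ifP => _; rewrite in_setX in_setT /= ?xV ?yV.
have [leaves | ] := boolP [forall z in verts_col j, #|nbr_col j z| <= 1].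
  exists (x0, false); first by rewrite in_setX in_setT x0V.
  apply/imsetP => -[[x y]]; rewrite inE /= => /andP [xy /eqP xyj].
  have [_ _ yV] := arc_col_mem xy xyj.
  by rewrite /arc_tag /= (forall_inP leaves y yV) => /(congr1 snd).
move/forall_inPn => [z zV nonleaf]; exists (z, true); first by rewrite in_setX in_setT zV.
apply/imsetP => -[[x y] _]; rewrite /arc_tag /=; case: ifP => yl; last by move/(congr1 snd).
by move/(congr1 fst) => /= zy; rewrite zy yl in nonleaf.
Qed.

Variable D : nat.
Hypothesis e_reg : regular e D.

Lemma card_arcs_from (A : {set T}) :
  #|[set d : T * T | (d.1 \in A) && e d.1 d.2]| = D * #|A|.
Proof.
rewrite -sum1dep_card -(pair_big_dep (mem A) e (fun _ _ => 1)) /=.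
rewrite (eq_bigr (fun _ => D)) => [|x _]; first by rewrite sum_nat_const mulnC.
by rewrite sum1dep_card -(e_reg x); apply: eq_card => y; rewrite inE.
Qed.

Lemma arcs_col_bound j : 2 * (D * #|verts_col j|) <= #|arcs| + #|arcs_col j|.
Proof.
pose P := [set d : T * T | (d.1 \in verts_col j) && e d.1 d.2].
pose Q := (fun d : T * T => (d.2, d.1)) @^-1: P.
have cardQ : #|Q| = #|P| by apply: card_preimset => -[x y] [x' y'] [-> ->].
have PQ : P :&: Q = arcs_col j.
  apply/setP => -[x y]; rewrite in_setI [_ \in Q]in_set /=.
  rewrite [(x, y) \in P]in_set [(y, x) \in P]in_set [_ \in arcs_col j]in_set /=.
  apply/idP/idP.
    by case/andP => /andP [xV xy] /andP [yV _]; rewrite xy (verts_col_induced xy xV yV) eqxx.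
  by case/andP => xy /eqP xyj; have [_ xV yV] := arc_col_mem xy xyj; rewrite xV yV xy e_sym xy.
have PQ_arcs : P :|: Q \subset arcs.
  apply/subsetP => -[x y]; rewrite in_setU [_ \in Q]in_set !in_set /=.
  by case/orP => /andP [_ xy] //; rewrite e_sym.
have := subset_leq_card PQ_arcs; have := subset_leq_card (subsetIl P Q).
by rewrite cardsU PQ cardQ card_arcs_from; lia.
Qed.

Lemma sum_card_arcs_col : \sum_(j < k) #|arcs_col j| = #|arcs|.
Proof.
rewrite -sum1dep_card (partition_big (fun d => col d.1 d.2) xpredT) //=.
by apply: eq_bigr => j _; rewrite sum1dep_card.
Qed.

Lemma arcs_col_deficit j : 0 < #|arcs_col j| -> D.-1 * #|arcs_col j| + D <= #|arcs|.
Proof.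
have [-> | D_gt0] := posnP D; first by rewrite mul0n.
move=> /arcs_col_lt /(leq_mul (leqnn D)); have := arcs_col_bound j.
rewrite mulnS mulnCA -[D in D * #|arcs_col j|](prednK D_gt0) mulSn; lia.
Qed.

Lemma colors_ge_degree : 0 < #|T| -> D <= k.
Proof.
case/card_gt0P => x0 _; have [-> // | D_gt0] := posnP D.
have [y0] : exists y0, y0 \in [set y | e x0 y] by apply/card_gt0P; rewrite e_reg.
rewrite inE => xy0; set j0 := col x0 y0.
have j0_gt0 : 0 < #|arcs_col j0| by apply/card_gt0P; exists (x0, y0); rewrite inE /= xy0 eqxx.
have N_gt0 : 0 < #|arcs| by apply/card_gt0P; exists (x0, y0); rewrite inE.
suff : D.-1 * #|arcs| < k * #|arcs| by rewrite ltn_pmul2r //; lia.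
have -> : k * #|arcs| = \sum_(j < k) #|arcs| by rewrite sum_nat_const card_ord.
rewrite -{1}sum_card_arcs_col big_distrr /=.
rewrite (bigD1 j0) //= [X in _ < X](bigD1 j0) //= -addSn leq_add ?leq_sum // => [|j _].
  by apply: leq_trans (arcs_col_deficit j0_gt0); rewrite -addn1 leq_add2l.
have [-> | ] := posnP #|arcs_col j|; first by rewrite muln0.
by move/arcs_col_deficit; apply: leq_trans; apply: leq_addr.
Qed.

End InjectiveColoringBound.

Lemma inj_chromatic_index_ge_degree (T : finType) (e : rel T) D :
  simple_graph e -> triangle_free e -> regular e D -> 0 < #|T| ->
  D <= inj_chromatic_index e.
Proof.
case=> e_sym e_irr e_tf e_reg T_gt0; rewrite /inj_chromatic_index.
case: ex_minnP => k /existsP [c c_inj] _.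
exact: (colors_ge_degree e_sym e_irr e_tf c_inj e_reg T_gt0).
Qed.

Theorem proposition1p8 (Delta g : nat) :
  3 <= Delta -> 3 <= g ->
  exists (T : finType) (e : rel T),
    [/\ simple_graph e, regular e Delta, bipartite e,
        girth_at_least e g & Delta <= inj_chromatic_index e].
Proof.
move=> Delta_ge3 g_ge3; pose s := @shift 'I_Delta g.-1.
have s_free : free_upto s g.-1 := @shift_free _ _.
have e_simple : simple_graph (bicayley s) := conj (bicayley_sym s) (bicayley_irr s).
have e_bip := bicayley_bipartite s.
have e_reg : regular (bicayley s) Delta.
  rewrite -[Delta in regular _ Delta]card_ord; apply/bicayley_regular/(free_upto_inj _ s_free).
  by rewrite -subn1 ltn_subRL.
exists ({perm {bseq g.-1 of 'I_Delta * bool}} * bool)%type, (bicayley s); split=> //.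
  by rewrite -[g in girth_at_least _ g](prednK (ltnW (ltnW g_ge3))); apply: bicayley_girth.
apply: (inj_chromatic_index_ge_degree e_simple (bipartite_triangle_free e_bip) e_reg).
by apply/card_gt0P; exists (1%g, false).
Qed.
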